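(* Let $\mathcal{G}$ be an $A$-compatible P-graph satisfying condition ( * ) below. Let $k\in\{1,\dots,d+1\}$, $\widetilde B\in\mathcal{B}^k$, $\ell\in\{1,\dots,m+1\}\setminus\widetilde B$, $B=\widetilde B\cup\{\ell\}$, and $\zeta\in\Theta_\mathcal{G}(F,B)$. Then: (i) for every $r\in\{1,\dots,d\}$ and $i\in B$, any directed path from $j_r$ to $i$ in $\zeta$ contains no edge of $\mathcal{E}^-$. (ii) If $\zeta'\in\Theta_\mathcal{G}(B)$ is such that for all $r=1,\dots,d$ the connected component of $\zeta'$ containing $j_r$ has root $g_\zeta(j_r)$, then the connected component of $\zeta'$ containing $m+1$ has root $g_\zeta(m+1)$; in particular $\zeta'\in\Theta_\mathcal{G}(F,B)$. Condition ( * ): for every $\ell'\in\{1,\dots,m\}$ and $i\in\{1,\dots,d\}$, every directed path in $\mathcal{G}$ from $j_i$ to $\ell'$ that contains an edge in $\mathcal{E}^-$ goes through $m+1$.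
   Context: $R$ is a partially ordered commutative ring. Let $d\ge0$, $m_0,\dots,m_d\ge0$ with $m=m_0+\cdots+m_d$. $A\in R^{m\times m}$, $b\in R^m$: for $i=1,\dots,d$ the rows indexed by $\mathcal{N}_i=\{1+\sum_{j<i}m_j,\dots,\sum_{j\le i}m_j\}$ are zero outside the columns indexed by $\mathcal{N}_i$, where they form a square $A_i$, and the corresponding subvector $b^i$ has at most one nonzero entry; the last $m_0$ rows form an arbitrary $A_0\in R^{m_0\times m}$ with arbitrary $b^0$. $\mathcal{N}=\{1,\dots,m+1\}$, $\mathcal{N}_0=\{m-m_0+1,\dots,m+1\}$, $\mathcal{N}_{d+1}=\{m+1\}$. Fixed $j_i\in\mathcal{N}_i$ with $b_j=0$ for all $j\le m-m_0$, $j\notin\{j_1,\dots,j_d\}$; $F=\{j_1,\dots,j_d,m+1\}$. $\mathcal{B}^k=\{\{w_j:j\in\{1,\dots,d+1\}\setminus\{k\}\}: w_j\in\mathcal{N}_j\}$. A multidigraph $\mathcal{G}=(\mathcal{N},\mathcal{E})$ has source/target maps $s,t$, no self-loops, labeling $\pi\colon\mathcal{E}\to R$, Laplacian $L_{ij}=\sum_{e:s(e)=j,t(e)=i}\pi(e)$ ($i\ne j$), $L_{ii}=-\sum_{k\ne i}L_{ki}$. $\mathcal{G}$ is $A$-compatible if (i) no edge goes from a node in $\mathcal{N}_i$ ($i\ge0$) to a node in $\mathcal{N}_j$ with $i\ne j$, $j\ge1$; (ii) for $\ell\notin F$ the $\ell$-th row of $L$ equals the $\ell$-th row of $(A\,|\,b)$.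 Trees/forests: subgraphs with acyclic underlying undirected graph (connected for trees), rooted at $N$ if $N$ is the only node without outgoing edges; spanning means node set $\mathcal{N}$; forests are identified with edge sets. $\Theta_\mathcal{G}(B)$: spanning forests with $|B|$ components, each a tree rooted at a node of $B$; $\Theta_\mathcal{G}(F,B)$ ($|F|=|B|$): those of them in which moreover each component contains a node of $F$. For $\zeta\in\Theta_\mathcal{G}(F,B)$, $g_\zeta\colon F\to B$ maps $i$ to the root of the tree of $\zeta$ containing $i$. A cycle is a closed directed path with no repeated nodes. $\mathcal{E}^-=\{e:\pi(e)\in R_{<0}\}$, $\mathcal{E}^+=\{e:\pi(e)\in R_{>0}\}$. $\mathcal{G}$ is a P-graph if there is $\mu\colon\mathcal{E}^-\to\mathcal{P}(\mathcal{E}^+)$ with (i) $\mathcal{E}=\mathcal{E}^+\sqcup\mathcal{E}^-$; (ii) every cycle contains at most one edge of $\mathcal{E}^-$; (iii) for $e\in\mathcal{E}^-$: (a) $e'\in\mu(e)\Rightarrow s(e')=s(e)$; (b) $e'\in\mu(e)\Rightarrow$ every cycle containing $e'$ contains $t(e)$; (c) $\mu(e)\cap\mu(e')=\emptyset$ for $e\ne e'$; (iv) $\pi(e)+\sum_{e'\in\mu(e)}\pi(e')\in R_{\ge0}$ for all $e\in\mathcal{E}^-$. *)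

(* Nodes are the natural numbers 1..m+1 (paper's 1-based
   indexing, kept literally); matrices/vectors are functions on 1-based
   indices (only indices in range are ever constrained). *)
From HB Require Import structures.
From mathcomp Require Import all_boot all_algebra.
Set Implicit Arguments. Unset Strict Implicit. Unset Printing Implicit Defensive.
Import GRing.Theory.

Record POCR (R : comPzRingType) := {
  le : R -> R -> Prop;
  le_refl : forall x, le x x;
  le_anti : forall x y, le x y -> le y x -> x = y;
  le_trans : forall x y z, le x y -> le y z -> le x z;
  le_add : forall x y z, le x y -> le (x + z)%R (y + z)%R;
  le_mul : forall x y, le 0%R x -> le 0%R y -> le 0%R (x * y)%R }.

Section Blocks.
Variables (d : nat) (ms : nat -> nat).

Definition msum : nat := \sum_(0 <= j < d.+1) ms j.

Definition inN (i v : nat) : bool :=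
  if i == 0 then (msum - ms 0 < v <= msum.+1)
  else if i == d.+1 then v == msum.+1
  else (1 + \sum_(1 <= j < i) ms j <= v <= \sum_(1 <= j < i.+1) ms j).

Definition lin_system {R : comPzRingType} (A : nat -> nat -> R) (b : nat -> R)
  (jj : nat -> nat) : Prop :=
  [/\
      (forall i r c, 0 < i <= d -> inN i r -> 0 < c <= msum -> ~~ inN i c ->
         A r c = 0%R),
      (forall i r1 r2, 0 < i <= d -> inN i r1 -> inN i r2 ->
         b r1 != 0%R -> b r2 != 0%R -> r1 = r2),
      (forall i, 0 < i <= d -> inN i (jj i)) &
      (forall j, 0 < j <= msum - ms 0 -> (forall r, 0 < r <= d -> j != jj r) ->
         b j = 0%R)].

Definition Fset (jj : nat -> nat) : seq nat := msum.+1 :: [seq jj r | r <- iota 1 d].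

Definition Btil (k : nat) (w : nat -> nat) : seq nat :=
  [seq w j | j <- iota 1 d.+1 & j != k].

Definition inBk (k : nat) (w : nat -> nat) : Prop :=
  forall j, 0 < j <= d.+1 -> j != k -> inN j (w j).

End Blocks.

Section Graph.
Variables (E : finType) (s t : E -> nat).

(* undirected walk v0 -e1- v1 -e2- ... -ek- vk using edges of Z;
   vs = [v1;...;vk], p = [e1;...;ek] *)
Fixpoint uwalkv (Z : {set E}) (v0 : nat) (vs : seq nat) (p : seq E) : bool :=
  match vs, p with
  | [::], [::] => true
  | v1 :: vs', e :: p' =>
      [&& e \in Z,
          ((s e == v0) && (t e == v1)) || ((s e == v1) && (t e == v0)) &
          uwalkv Z v1 vs' p']
  | _, _ => false
  end.

Fixpoint dwalkv (Z : {set E}) (v0 : nat) (vs : seq nat) (p : seq E) : bool :=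
  match vs, p with
  | [::], [::] => true
  | v1 :: vs', e :: p' =>
      [&& e \in Z, s e == v0, t e == v1 & dwalkv Z v1 vs' p']
  | _, _ => false
  end.

Definition uconn (Z : {set E}) (u v : nat) : Prop :=
  exists vs p, uwalkv Z u vs p /\ last u vs = v.

Definition uacyclic (Z : {set E}) : Prop :=
  forall v0 vs p, p != [::] -> uniq p -> uwalkv Z v0 vs p ->
    last v0 vs = v0 -> uniq vs -> False.

Definition dpath (Z : {set E}) (u : nat) (vs : seq nat) (p : seq E) (w : nat)
  : Prop := [/\ dwalkv Z u vs p, last u vs = w & uniq (u :: vs)].

(* directed cycle of the whole graph (closed directed path, no repeated nodes);
   its nodes are map s p *)
Definition dcycle (p : seq E) : Prop :=
  exists v0 vs, [/\ p != [::], dwalkv [set: E] v0 vs p, last v0 vs = v0 & uniq vs].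

Variable m : nat.
Definition inNodes (v : nat) : bool := 0 < v <= m.+1.

Definition graph_ok : Prop :=
  forall e, [/\ inNodes (s e), inNodes (t e) & s e != t e].

Definition rootof (Z : {set E}) (v r : nat) : Prop :=
  [/\ inNodes r, uconn Z v r & forall e, e \in Z -> s e != r].

Definition ncomp (Z : {set E}) (n : nat) : Prop :=
  exists reps : seq nat,
    [/\ uniq reps, size reps = n, all inNodes reps,
        (forall a c, a \in reps -> c \in reps -> uconn Z a c -> a = c) &
        (forall v, inNodes v -> exists2 a, a \in reps & uconn Z v a)].

Definition Theta (B : seq nat) (Z : {set E}) : Prop :=
  [/\ uacyclic Z, ncomp Z (size (undup B)) &
      forall v, inNodes v -> exists r,
        [/\ rootof Z v r, r \in B & forall r', rootof Z v r' -> r' = r]].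

Definition ThetaF (F B : seq nat) (Z : {set E}) : Prop :=
  Theta B Z /\ forall v, inNodes v -> exists2 f, f \in F & uconn Z v f.

End Graph.

Section Labels.
Variables (R : comPzRingType) (E : finType) (s t : E -> nat) (pi : E -> R).

Definition Loff (i j : nat) : R := (\sum_(e | (s e == j) && (t e == i)) pi e)%R.

Definition Lap (m i j : nat) : R :=
  if i == j then (- \sum_(k <- iota 1 m.+1 | k != i) Loff k i)%R else Loff i j.

Variables (d : nat) (ms : nat -> nat) (A : nat -> nat -> R) (b : nat -> R)
  (jj : nat -> nat).

Definition Acompatible : Prop :=
  (forall e i j, i <= d -> 0 < j <= d -> i != j ->
     inN d ms i (s e) -> ~~ inN d ms j (t e)) /\
  (forall l, 0 < l <= msum d ms -> (forall r, 0 < r <= d -> l != jj r) ->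
     (forall c, 0 < c <= msum d ms -> Lap (msum d ms) l c = A l c) /\
     Lap (msum d ms) l (msum d ms).+1 = b l).

Variable ord : POCR R.
Definition negE (e : E) : Prop := le ord (pi e) 0%R /\ pi e != 0%R.
Definition posE (e : E) : Prop := le ord 0%R (pi e) /\ pi e != 0%R.

Definition Pgraph : Prop :=
  exists mu : E -> {set E},
  [/\ (forall e, negE e \/ posE e),
      (forall p, dcycle s t p -> forall e1 e2, e1 \in p -> e2 \in p ->
          negE e1 -> negE e2 -> e1 = e2) &
      forall e, negE e ->
      [/\ forall e', e' \in mu e -> posE e',
          forall e', e' \in mu e -> s e' = s e,
          forall e', e' \in mu e -> forall p, dcycle s t p -> e' \in p ->
             t e \in map s p,
          forall e2, negE e2 -> e2 != e -> mu e :&: mu e2 = set0 &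
          le ord 0%R (pi e + \sum_(e' in mu e) pi e')%R]].

Definition condStar : Prop :=
  forall l' i, 0 < l' <= msum d ms -> 0 < i <= d ->
  forall vs p, dpath s t [set: E] (jj i) vs p l' ->
  (exists2 e, e \in p & negE e) -> (msum d ms).+1 \in jj i :: vs.

End Labels.

From HB Require Import structures.
From mathcomp Require Import all_boot all_algebra zify.
Set Implicit Arguments. Unset Strict Implicit. Unset Printing Implicit Defensive.

(* (i) In a forest of Theta(F,B) with |B| = |F|, the |B| trees each contain a
   node of F, so distinct nodes of F lie in distinct trees; in particular no
   j_r is connected to m+1, whereas by condition (star) a path from j_r to a
   node of B through a negative edge would pass through m+1.
   (ii) By A-compatibility no edge leaves N_0, so following out-edges from
   m+1 ends at a root in B ∩ N_0 ⊆ {l, m+1}: the root of m+1 is m+1 if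
   m+1 ∈ B and l otherwise, in every forest of Theta(B).  Once all nodes of F
   have the same roots in zeta and zeta', each root rho of zeta' is the
   zeta-root of some node f of F, hence also its zeta'-root, so the tree of
   rho in zeta' contains f. *)

Lemma mem_iota1 j n : (j \in iota 1 n) = (0 < j <= n).
Proof. by rewrite mem_iota add1n ltnS. Qed.

Lemma size_rem_lt (T : eqType) (x : T) (S : seq T) : x \in S -> size (rem x S) < size S.
Proof. by move=> xS; rewrite size_rem //; case: S xS. Qed.

Section Forests.
Variables (E : finType) (s t : E -> nat).
Implicit Types (Z : {set E}) (vs : seq nat) (p : seq E).

Lemma dwalk_size Z v vs p : dwalkv s t Z v vs p -> size vs = size p.
Proof. by elim: vs v p => [|a vs IH] v [|e p] //= /and4P[_ _ _ /IH ->]. Qed.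

Lemma dwalk_targets Z v vs p : dwalkv s t Z v vs p -> map t p = vs.
Proof. by elim: vs v p => [|a vs IH] v [|e p] //= /and4P[_ _ /eqP-> /IH ->]. Qed.

Lemma dwalk_uwalk Z v vs p : dwalkv s t Z v vs p -> uwalkv s t Z v vs p.
Proof.
elim: vs v p => [|a vs IH] v [|e p] //= /and4P[-> /eqP-> /eqP-> /IH->].
by rewrite !eqxx.
Qed.

Lemma dwalk_subset Z Z' v vs p :
  Z \subset Z' -> dwalkv s t Z v vs p -> dwalkv s t Z' v vs p.
Proof.
move=> /subsetP sZ; elim: vs v p => [|a vs IH] v [|e p] //=.
by case/and4P=> /sZ-> -> -> /IH->.
Qed.

Lemma dwalk_rcons Z v vs p a e : size vs = size p ->
  dwalkv s t Z v (rcons vs a) (rcons p e) =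
  dwalkv s t Z v vs p && [&& e \in Z, s e == last v vs & t e == a].
Proof.
elim: vs v p => [|b vs IH] v [|f p] //= sz; first by rewrite andbT.
by rewrite IH -?andbA //; case: sz.
Qed.

Lemma dwalk_suffix Z v vs p y : dwalkv s t Z v vs p -> uniq (v :: vs) ->
  y \in v :: vs ->
  exists vs' p', [/\ dwalkv s t Z y vs' p', last y vs' = last v vs & uniq (y :: vs')].
Proof.
elim: vs v p => [|a vs IH] v [|e p] //=.
  by move=> _ _; rewrite inE => /eqP->; exists [::], [::].
move=> W /andP[vvs U]; rewrite inE => /predU1P[->|yvs].
  by exists (a :: vs), (e :: p); split=> //=; rewrite vvs.
by case/and4P: W => _ _ _ /IH; apply.
Qed.

Lemma uconn_refl Z v : uconn s t Z v v.
Proof. by exists [::], [::]. Qed.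

Lemma uwalk_cat Z v vs1 p1 vs2 p2 : uwalkv s t Z v vs1 p1 ->
  uwalkv s t Z (last v vs1) vs2 p2 -> uwalkv s t Z v (vs1 ++ vs2) (p1 ++ p2).
Proof.
elim: vs1 v p1 => [|a vs IH] v [|e p] //=.
by case/and3P=> -> -> /IH H /H ->.
Qed.

Lemma uconn_trans Z u v x : uconn s t Z u v -> uconn s t Z v x -> uconn s t Z u x.
Proof.
case=> [vs1 [p1 [W1 <-]]] [vs2 [p2 [W2 <-]]].
by exists (vs1 ++ vs2), (p1 ++ p2); rewrite last_cat uwalk_cat.
Qed.

Lemma uconn_edge Z e : e \in Z -> uconn s t Z (s e) (t e).
Proof. by move=> eZ; exists [:: t e], [:: e]; rewrite /= eZ !eqxx. Qed.

Lemma uconn_sym Z u v : uconn s t Z u v -> uconn s t Z v u.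
Proof.
case=> vs [p [W <-]]; elim: vs u p W => [|a vs IH] u [|e p] //=.
  by move=> _; apply: uconn_refl.
case/and3P=> eZ He /IH /uconn_trans; apply.
by exists [:: u], [:: e]; rewrite /= eZ andbT orbC.
Qed.

Lemma dwalk_uconn Z v vs p y :
  dwalkv s t Z v vs p -> y \in v :: vs -> uconn s t Z v y.
Proof.
elim: vs v p => [|a vs IH] v [|e p] //=.
  by move=> _; rewrite inE => /eqP->; apply: uconn_refl.
case/and4P=> eZ /eqP sv /eqP ta W; rewrite inE => /predU1P[->|yvs].
  exact: uconn_refl.
by apply: uconn_trans (IH _ _ W yvs); rewrite -sv -ta; apply: uconn_edge.
Qed.

Lemma acyclic_dwalk_fresh Z v vs p e : uacyclic s t Z ->
  dwalkv s t Z v vs p -> uniq (v :: vs) -> e \in Z -> s e = last v vs ->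
  t e \notin v :: vs.
Proof.
move=> acZ W U eZ se; apply/negP => /(dwalk_suffix W U) [vs' [p' [W' L' U']]].
apply: (acZ (t e) (rcons vs' (t e)) (rcons p' e)).
- by rewrite -size_eq0 size_rcons.
- by apply: (@map_uniq _ _ t); rewrite map_rcons (dwalk_targets W') rcons_uniq.
- by apply: dwalk_uwalk; rewrite dwalk_rcons ?(dwalk_size W') // W' eZ L' se !eqxx.
- by rewrite last_rcons.
- by rewrite rcons_uniq.
Qed.

Variable m : nat.

Lemma uniq_reps_size_le Z (reps S : seq nat) : uniq reps ->
  (forall a c, a \in reps -> c \in reps -> uconn s t Z a c -> a = c) ->
  (forall a, a \in reps -> exists2 f, f \in S & uconn s t Z a f) ->
  size reps <= size S.
Proof.
elim: reps S => [|a reps IH] S //= /andP[areps U] Hsep Hcov.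
have [f fS af] := Hcov a (mem_head _ _).
suff: size reps <= size (rem f S) by move/leq_ltn_trans; apply; apply: size_rem_lt.
apply: IH U _ _ => [b c br cr|c cr]; first by apply: Hsep; rewrite inE ?br ?cr orbT.
have cr' : c \in a :: reps by rewrite inE cr orbT.
have [g gS cg] := Hcov c cr'.
exists g => //; apply: rem_mem gS; apply/eqP => gf.
have ac : a = c.
  rewrite gf in cg; exact: Hsep (mem_head _ _) cr' (uconn_trans af (uconn_sym cg)).
by rewrite ac cr in areps.
Qed.

Lemma ncomp_le_size Z n (S : seq nat) : ncomp s t m Z n ->
  (forall v, inNodes m v -> exists2 f, f \in S & uconn s t Z v f) -> n <= size S.
Proof.
case=> reps [U <- nodes Hsep _] Hcov.
by apply: uniq_reps_size_le U Hsep _ => a /(allP nodes) /Hcov.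
Qed.

Lemma theta_sink B Z x : Theta s t m B Z -> x \in B ->
  forall e, e \in Z -> s e != x.
Proof.
case=> _ HZ Hroot xB e eZ; apply/eqP => sex.
suff: size (undup B) <= size (rem x (undup B)).
  by rewrite leqNgt size_rem_lt ?mem_undup.
apply: ncomp_le_size HZ _ => v /Hroot [r [[_ vr rsink] rB _]].
exists r => //; apply: rem_mem; last by rewrite mem_undup.
by apply/eqP => rx; move: (rsink e eZ); rewrite sex rx eqxx.
Qed.

Lemma thetaF_disconnected F B Z x y : ThetaF s t m F B Z ->
  size (undup B) = size F -> x \in F -> y \in F -> x != y -> ~ uconn s t Z x y.
Proof.
move=> [[_ HZ _] HF] szB xF yF xy xy_conn.
suff: size (undup B) <= size (rem x F) by rewrite szB leqNgt size_rem_lt.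
apply: ncomp_le_size HZ _ => v /HF [f fF vf].
have [fx | fx] := eqVneq f x.
  exists y; first by apply: rem_mem; rewrite // eq_sym.
  by rewrite fx in vf; apply: uconn_trans vf xy_conn.
by exists f => //; apply: rem_mem.
Qed.

Lemma rootof_unique B Z v a c : Theta s t m B Z -> inNodes m v ->
  rootof s t m Z v a -> rootof s t m Z v c -> a = c.
Proof. by case=> _ _ /[apply] [[r [_ _ uniq_r]]] /uniq_r-> /uniq_r->. Qed.

Lemma rootof_mem B Z v a : Theta s t m B Z -> inNodes m v ->
  rootof s t m Z v a -> a \in B.
Proof. by case=> _ _ /[apply] [[r [_ rB uniq_r]]] /uniq_r->. Qed.

Lemma thetaF_of_roots F B Z Z' : ThetaF s t m F B Z -> Theta s t m B Z' ->
  (forall f x, f \in F -> rootof s t m Z f x -> rootof s t m Z' f x) ->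
  ThetaF s t m F B Z'.
Proof.
move=> [HZ HF] HZ' Hroots; split=> // v vN.
case: (HZ') => _ _ /(_ v vN) [rho [[rhoN vrho _] rhoB _]].
have [f fF rhof] := HF rho rhoN.
have /Hroots[// | _ frho _] : rootof s t m Z f rho.
  by split=> //; [apply: uconn_sym | apply: theta_sink HZ rhoB].
by exists f => //; apply: uconn_trans vrho (uconn_sym frho).
Qed.

Hypothesis Hg : graph_ok s t m.

Lemma dwalk_nodes Z v vs p : dwalkv s t Z v vs p -> all (inNodes m) vs.
Proof.
elim: vs v p => [|a vs IH] v [|e p] //= /and4P[_ _ /eqP<- /IH->].
by case: (Hg e) => _ -> _.
Qed.

Lemma uniq_nodes_size vs : uniq vs -> all (inNodes m) vs -> size vs <= m.+1.
Proof.
move=> U /allP nodes; rewrite -(size_iota 1 m.+1); apply: uniq_leq_size => // x.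
by move/nodes; rewrite mem_iota1.
Qed.

Lemma dwalk_to_sink Z v : uacyclic s t Z ->
  exists vs p, dwalkv s t Z v vs p /\ forall e, e \in Z -> s e != last v vs.
Proof.
move=> acZ.
suff ext n vs p : dwalkv s t Z v vs p -> uniq (v :: vs) -> m.+1 < size vs + n ->
    exists vs p, dwalkv s t Z v vs p /\ forall e, e \in Z -> s e != last v vs.
  exact: (ext m.+2 [::] [::]).
elim: n vs p => [|n IH] vs p W U lt.
  have /andP[_ /uniq_nodes_size] := U; rewrite addn0 in lt.
  by move=> /(_ (dwalk_nodes W)); rewrite leqNgt lt.
have [e /andP[eZ /eqP se] | nosucc] := pickP (fun e => (e \in Z) && (s e == last v vs)).
  apply: (IH (rcons vs (t e)) (rcons p e)).
  - by rewrite dwalk_rcons ?(dwalk_size W) // W eZ se !eqxx.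
  - by rewrite -rcons_cons rcons_uniq (acyclic_dwalk_fresh acZ W U eZ se).
  - by rewrite size_rcons addSnnS.
exists vs, p; split=> // e eZ; apply/eqP => se.
by have := nosucc e; rewrite eZ se eqxx.
Qed.

Lemma dwalk_to_root Z v : uacyclic s t Z -> inNodes m v ->
  exists vs p, dwalkv s t Z v vs p /\ rootof s t m Z v (last v vs).
Proof.
move=> /(dwalk_to_sink v) [vs [p [W sink]]] vN; exists vs, p; split=> //; split=> //.
  have := mem_last v vs; rewrite inE => /predU1P[-> //|].
  exact: (allP (dwalk_nodes W)).
exact: dwalk_uconn W (mem_last _ _).
Qed.

End Forests.

Lemma partial_sum_mono (ms : nat -> nat) a c : a <= c ->
  \sum_(1 <= j < a) ms j <= \sum_(1 <= j < c) ms j.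
Proof.
move=> ac; have [a1|a1] := leqP a 1; first by rewrite big_geq.
by rewrite (big_cat_nat (ltnW a1) ac) leq_addr.
Qed.

Lemma partial_sum_cover (ms : nat -> nat) n v :
  0 < v <= \sum_(1 <= j < n.+1) ms j ->
  exists2 i, 0 < i <= n & \sum_(1 <= j < i) ms j < v <= \sum_(1 <= j < i.+1) ms j.
Proof.
elim: n => [|n IH] /andP[v0 vn]; first by move: vn; rewrite big_geq // leqNgt v0.
have [vle|vgt] := leqP v (\sum_(1 <= j < n.+1) ms j).
  have [|i /andP[i0 iN] hi] := IH; first by rewrite v0 vle.
  by exists i; rewrite ?i0 ?(leq_trans iN).
by exists n.+1; rewrite ?leqnn ?vgt.
Qed.

Section Blocks.
Variables (d : nat) (ms : nat -> nat).
Local Notation M := (msum d ms).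
Local Notation S i := (\sum_(1 <= j < i) ms j).

Lemma msum_split : M = ms 0 + S d.+1.
Proof. by rewrite /msum big_ltn. Qed.

Lemma inN_block i v : 0 < i <= d -> inN d ms i v = (S i < v <= S i.+1).
Proof. by case/andP=> i0 id; rewrite /inN gtn_eqF // ltn_eqF // add1n. Qed.

Lemma inN_last v : inN d ms d.+1 v = (v == M.+1).
Proof. by rewrite /inN eqxx. Qed.

Lemma inN_zero v : inN d ms 0 v = (S d.+1 < v <= M.+1).
Proof. by rewrite /inN eqxx {1}msum_split addKn. Qed.

Lemma inN_block_bound i v : 0 < i <= d -> inN d ms i v -> 0 < v <= S d.+1.
Proof.
move=> hi; rewrite inN_block // => /andP[lo up].
by rewrite (leq_ltn_trans _ lo) // (leq_trans up) // partial_sum_mono //; case/andP: hi.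
Qed.

Lemma inN_cover v : 0 < v <= S d.+1 -> exists2 i, 0 < i <= d & inN d ms i v.
Proof. by case/partial_sum_cover=> i hi vi; exists i; rewrite ?inN_block. Qed.

Lemma inN_inj i j v : 0 < i <= d.+1 -> 0 < j <= d.+1 ->
  inN d ms i v -> inN d ms j v -> i = j.
Proof.
wlog ij : i j / i < j.
  move=> wlog hi hj vi vj; case: (ltngtP i j) => // [ij|ji].
    exact: wlog ij hi hj vi vj.
  exact/esym/(wlog j i).
move=> /andP[i0 id1] /andP[j0 jd1] vi vj; exfalso.
have id : 0 < i <= d by rewrite i0 -ltnS (leq_trans ij).
have /andP[_ vS] := inN_block_bound id vi.
have [jd|jd] := leqP j d.
  move: vi vj; rewrite !inN_block ?j0 // => /andP[_ viS] /andP[Sjv _].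
  have := partial_sum_mono ms ij; lia.
have jd1' : j = d.+1 by apply/eqP; rewrite eqn_leq jd1.
by move: vj vS; rewrite jd1' inN_last => /eqP->; rewrite msum_split; lia.
Qed.

End Blocks.

Section CompatibleForests.
Variables (R : comPzRingType) (ord : POCR R) (E : finType) (s t : E -> nat)
  (pi : E -> R) (d : nat) (ms : nat -> nat) (jj : nat -> nat) (k : nat)
  (w : nat -> nat) (l : nat).
Local Notation M := (msum d ms).
Local Notation T := (\sum_(1 <= j < d.+1) ms j).
Local Notation B := (l :: Btil d k w).
Local Notation F := (Fset d ms jj).

Hypothesis Hg : graph_ok s t M.
Hypothesis Hjj : forall r, 0 < r <= d -> inN d ms r (jj r).
Hypothesis Hk : 0 < k <= d.+1.
Hypothesis Hw : inBk d ms k w.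
Hypothesis Hl : 0 < l <= M.+1.
Hypothesis HlB : l \notin Btil d k w.

Lemma jj_bound r : 0 < r <= d -> 0 < jj r <= M.
Proof. by move=> hr; have := inN_block_bound hr (Hjj hr); rewrite msum_split; lia. Qed.

Lemma mem_B x : x \in B -> [\/ x = l, x = M.+1 | 0 < x <= T].
Proof.
rewrite inE => /predU1P[->|/mapP[j]]; first by constructor 1.
rewrite mem_filter mem_iota1 => /andP[jk hj] ->.
have wj := Hw hj jk.
have [jd|jd] := leqP j d.
  by constructor 3; apply: inN_block_bound wj; case/andP: hj => ->.
have jd1 : j = d.+1 by apply/eqP; rewrite eqn_leq; case/andP: hj => _ ->.
by constructor 2; move: wj; rewrite jd1 inN_last => /eqP.
Qed.

Lemma B_nodes x : x \in B -> inNodes M x.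
Proof. by case/mem_B => [->|->|]; rewrite /inNodes ?Hl ?leqnn // msum_split; lia. Qed.

Lemma Btil_uniq : uniq (Btil d k w).
Proof.
rewrite map_inj_in_uniq ?filter_uniq ?iota_uniq // => i j.
rewrite !mem_filter !mem_iota1 => /andP[ik hi] /andP[jk hj] wij.
by move: (Hw hj jk); rewrite -wij; apply: inN_inj hi hj (Hw hi ik).
Qed.

Lemma size_undup_B : size (undup B) = d.+1.
Proof.
rewrite undup_id /= ?HlB ?Btil_uniq // size_map -rem_filter ?iota_uniq //.
by rewrite size_rem ?size_iota // mem_iota1.
Qed.

Lemma size_F : size F = d.+1.
Proof. by rewrite /Fset /= size_map size_iota. Qed.

Lemma mem_F_jj r : 0 < r <= d -> jj r \in F.
Proof. by move=> hr; rewrite inE map_f ?orbT ?mem_iota1. Qed.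

Lemma thetaF_jj_top_disconnected Z r : ThetaF s t M F B Z -> 0 < r <= d ->
  ~ uconn s t Z (jj r) M.+1.
Proof.
move=> HZ hr; apply: thetaF_disconnected HZ _ (mem_F_jj hr) (mem_head _ _) _.
  by rewrite size_undup_B size_F.
by rewrite ltn_eqF // ltnS; case/andP: (jj_bound hr).
Qed.

Hypothesis Hstar : condStar s t pi d ms jj ord.

Lemma thetaF_path_nonnegative Z : ThetaF s t M F B Z ->
  forall r i, 0 < r <= d -> i \in B ->
  forall vs p, dpath s t Z (jj r) vs p i -> forall e, e \in p -> ~ negE pi ord e.
Proof.
move=> HZ r i hr iB vs p [W iend U] e ep ne.
have offpath y : y \in jj r :: vs -> y != M.+1.
  move=> /(dwalk_uconn W) jy; apply/eqP => yM; rewrite yM in jy.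
  exact: thetaF_jj_top_disconnected HZ hr jy.
have [iM|iM] := eqVneq i M.+1.
  by move: (offpath _ (mem_last (jj r) vs)); rewrite iend iM eqxx.
have iN : 0 < i <= M by move: (B_nodes iB) iM; rewrite /inNodes; lia.
have Wall := dwalk_subset (subsetT Z) W.
have /offpath := Hstar iN hr (And3 Wall iend U) (ex_intro2 _ _ e ep ne).
by rewrite eqxx.
Qed.

Hypothesis Hc0 : forall e j, 0 < j <= d -> inN d ms 0 (s e) -> ~~ inN d ms j (t e).

Lemma inN0_edge e : inN d ms 0 (s e) -> inN d ms 0 (t e).
Proof.
move=> se; apply: contraT => te.
have [_ /andP[te0 teM] _] := Hg e.
have [j hj] : exists2 j, 0 < j <= d & inN d ms j (t e).
  by apply: inN_cover; move: te; rewrite inN_zero teM andbT -leqNgt te0.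
by move=> tej; move: (Hc0 hj se); rewrite tej.
Qed.

Lemma inN0_dwalk Z v vs p : dwalkv s t Z v vs p ->
  inN d ms 0 v -> inN d ms 0 (last v vs).
Proof.
elim: vs v p => [|a vs IH] v [|e p] //= /and4P[_ /eqP sv /eqP <- /IH IHp] v0.
by apply: IHp; apply: inN0_edge; rewrite sv.
Qed.

Lemma mem_B_inN0 x : x \in B -> inN d ms 0 x -> x = l \/ x = M.+1.
Proof.
by case/mem_B => [->|->|/andP[_ xT]]; [left | right | rewrite inN_zero ltnNge xT].
Qed.

Lemma rootof_top Z x : Theta s t M B Z -> rootof s t M Z M.+1 x ->
  x = if M.+1 \in B then M.+1 else l.
Proof.
move=> HZ hx; have MN : inNodes M M.+1 by rewrite /inNodes leqnn.
case: ifP => MB.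
  have MM : rootof s t M Z M.+1 M.+1.
    by split=> //; [apply: uconn_refl | apply: theta_sink HZ MB].
  exact: rootof_unique HZ MN hx MM.
have x0 : inN d ms 0 x.
  case: (HZ) => acZ _ _; have [vs [p [W hr]]] := dwalk_to_root Hg acZ MN.
  rewrite (rootof_unique HZ MN hx hr); apply: inN0_dwalk W _.
  by rewrite inN_zero leqnn andbT ltnS msum_split leq_addl.
have xB := rootof_mem HZ MN hx.
by case: (mem_B_inN0 xB x0) => // xM; rewrite -xM xB in MB.
Qed.

Lemma rootof_top_transfer Z Z' x : Theta s t M B Z -> Theta s t M B Z' ->
  rootof s t M Z M.+1 x -> rootof s t M Z' M.+1 x.
Proof.
move=> HZ HZ' hx; have MN : inNodes M M.+1 by rewrite /inNodes leqnn.
case: (HZ') => _ _ /(_ M.+1 MN) [r [hr _ _]].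
by rewrite (rootof_top HZ hx) -(rootof_top HZ' hr).
Qed.

End CompatibleForests.

Theorem lemma5p2 (R : comPzRingType) (ord : POCR R) (d : nat) (ms : nat -> nat)
  (A : nat -> nat -> R) (b : nat -> R) (jj : nat -> nat)
  (E : finType) (s t : E -> nat) (pi : E -> R)
  (Hsys : lin_system d ms A b jj)
  (Hg : graph_ok s t (msum d ms))
  (Hcomp : Acompatible s t pi d ms A b jj)
  (HP : Pgraph s t pi ord)
  (Hstar : condStar s t pi d ms jj ord)
  (k : nat) (w : nat -> nat) (l : nat) (zeta : {set E}) :
  0 < k <= d.+1 -> inBk d ms k w ->
  0 < l <= (msum d ms).+1 -> l \notin Btil d k w ->
  ThetaF s t (msum d ms) (Fset d ms jj) (l :: Btil d k w) zeta ->
  (* (i) *)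
  (forall r i, 0 < r <= d -> i \in l :: Btil d k w ->
     forall vs p, dpath s t zeta (jj r) vs p i ->
     forall e, e \in p -> ~ negE pi ord e) /\
  (* (ii) *)
  (forall zeta' : {set E},
     Theta s t (msum d ms) (l :: Btil d k w) zeta' ->
     (forall r x, 0 < r <= d -> rootof s t (msum d ms) zeta (jj r) x ->
        rootof s t (msum d ms) zeta' (jj r) x) ->
     (forall x, rootof s t (msum d ms) zeta (msum d ms).+1 x ->
        rootof s t (msum d ms) zeta' (msum d ms).+1 x) /\
     ThetaF s t (msum d ms) (Fset d ms jj) (l :: Btil d k w) zeta').
Proof.
move=> hk Hw hl lB HZ; have [_ _ Hjj _] := Hsys.
have Hc0 e j : 0 < j <= d -> inN d ms 0 (s e) -> ~~ inN d ms j (t e).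
  by move=> hj; apply: Hcomp.1 => //; rewrite neq_ltn; case/andP: hj => ->.
split; first exact: (thetaF_path_nonnegative Hjj hk Hw hl lB Hstar HZ).
move=> zeta' HZ' Hroots.
have top x := rootof_top_transfer Hg Hw Hc0 (x := x) HZ.1 HZ'.
split=> //; apply: thetaF_of_roots HZ HZ' _ => f x.
rewrite inE => /predU1P[->|/mapP[r]]; first exact: top.
by rewrite mem_iota1 => hr ->; apply: Hroots.
Qed.
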